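(* Let $N$ be a society, $D$ an $N$-coalition, $\nabla$ an ES basic fusion operator satisfying (ESF-SD), (ESF-P) and (ESF-I), and $w\neq w'$ interpretations. Suppose $E_{w,w'},E_{w'}\in\mathcal E$ satisfy $[\![B(E_{w,w'})]\!]=\{w,w'\}$, $[\![B(E_{w'})]\!]=\{w'\}$, and $D$ is locally decisive for $E_{w,w'}$ against $E_{w'}$. Then for every interpretation $w''\notin\{w,w'\}$ and all $E_{w,w''},E_{w''}\in\mathcal E$ with $[\![B(E_{w,w''})]\!]=\{w,w''\}$ and $[\![B(E_{w''})]\!]=\{w''\}$, $D$ is decisive for $E_{w,w''}$ against $E_{w''}$.
   Context: Setting: epistemic space $(\mathcal E,B,\mathcal L_{\mathcal P})$ ($\mathcal E$ nonempty, $B:\mathcal E\to$ propositional formulas over finite $\mathcal P$, $|\mathcal P|\ge2$, image modulo equivalence exactly the consistent formulas; $[\![\phi]\!]$ models; $\varphi_M$ a formula with models exactly $M$); agents: well-ordered set $\mathcal S$; society: nonempty finite $N\subseteq\mathcal S$; $N$-profile $\Phi:N\to\mathcal E$, $E_i=\Phi(i)$, identified with $E_i$ if $N=\{i\}$; profiles on $\{i_1<\dots<i_n\}$, $\{j_1<\dots<j_m\}$ equivalent if $n=m$ and entries coincide position-wise. ES basic fusion operator: a map $\nabla(\Phi,E)\in\mathcal E$ with (ESF1) $B(\nabla(\Phi,E))\vdash B(E)$; (ESF2) equivalent profiles and $B(E)\equiv B(E')$ give equivalent $B(\nabla)$; (ESF3) if $B(E)\equiv B(E')\wedge B(E'')$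 then $B(\nabla(\Phi,E'))\wedge B(E'')\vdash B(\nabla(\Phi,E))$; (ESF4) if moreover $B(\nabla(\Phi,E'))\wedge B(E'')\nvdash\bot$ then $B(\nabla(\Phi,E))\vdash B(\nabla(\Phi,E'))\wedge B(E'')$. (ESF-SD): for every agent $i$, interpretations $w_1,w_2,w_3$ and $E_{w_1,w_2},E_{w_2,w_3}$ with $[\![B(E_{w_1,w_2})]\!]=\{w_1,w_2\}$, $[\![B(E_{w_2,w_3})]\!]=\{w_2,w_3\}$, there exist $i$-profiles realising each of: (i) $B(\nabla(E_i,E_{w_1,w_2}))\equiv\varphi_{w_1,w_2}$ and $B(\nabla(E_i,E_{w_2,w_3}))\equiv\varphi_{w_2,w_3}$; (ii) $\equiv\varphi_{w_1,w_2}$ and $\equiv\varphi_{w_2}$; (iii) $\equiv\varphi_{w_1}$ and $\equiv\varphi_{w_2,w_3}$; (iv) $\equiv\varphi_{w_1}$ and $\equiv\varphi_{w_2}$. (ESF-P): for every $N$, $N$-profile $\Phi$, $E,E'$: if $\bigwedge_{i\in N}B(\nabla(E_i,E))\nvdash\bot$ and $B(\nabla(E_i,E))\wedge B(E')\vdash\bot$ for all $i\in N$ then $B(\nabla(\Phi,E))\wedge B(E')\vdash\bot$. (ESF-I): for every $N$, $N$-profiles $\Phi,\Phi'$, $E$: if for every $E'$ with $B(E')\vdash B(E)$, $B(\nabla(E_j,E'))\equiv B(\nabla(E'_j,E'))$ for all $j\in N$, then $B(\nabla(\Phi,E))\equiv B(\nabla(\Phi',E))$. An $N$-coalition is a subset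 $D\subseteq N$. $D$ is locally decisive for $E$ against $E'$ if for every $N$-profile $\Phi$ with (i) $B(\nabla(E_i,E))\wedge B(E')\vdash\bot$ for all $i\in D$, (ii) $B(\nabla(E_j,E))\equiv B(E')$ for all $j\in N\setminus D$, (iii) $\bigwedge_{i\in D}B(\nabla(E_i,E))\nvdash\bot$, we have $B(\nabla(\Phi,E))\wedge B(E')\vdash\bot$. $D$ is decisive for $E$ against $E'$ if the same conclusion holds for every $N$-profile satisfying only (i) and (iii). *)

From mathcomp Require Import all_boot all_order.
Set Implicit Arguments. Unset Strict Implicit. Unset Printing Implicit Defensive.
Import Order.TTheory.

Inductive form (P : Type) : Type :=
  | FVar of P
  | FTop
  | FBot
  | FNeg of form P
  | FAnd of form P & form P
  | FOr of form P & form P.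
Arguments FTop {P}.
Arguments FBot {P}.

Definition interp (P : finType) := {ffun P -> bool}.

Fixpoint eval (P : finType) (w : interp P) (f : form P) : bool :=
  match f with
  | FVar p => w p
  | FTop => true
  | FBot => false
  | FNeg g => ~~ eval w g
  | FAnd g h => eval w g && eval w h
  | FOr g h => eval w g || eval w h
  end.

Definition models (P : finType) (f : form P) : {set interp P} :=
  [set w | eval w f].

Definition entails (P : finType) (f g : form P) : Prop :=
  forall w : interp P, eval w f -> eval w g.
Definition fequiv (P : finType) (f g : form P) : Prop :=
  entails f g /\ entails g f.
Definition consistent (P : finType) (f : form P) : Prop := ~ entails f FBot.

Definition bigAnd (P : finType) (s : seq (form P)) : form P := foldr (@FAnd P) FTop s.

Definition epistemic_space (P : finType) (E : Type) (B : E -> form P) : Prop :=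
  inhabited E /\ (forall f : form P, consistent f <-> exists e : E, fequiv (B e) f).

(** Agents form a well-ordered set S (an orderType whose strict order is
    well-founded, assumed in the theorem).  A society is a nonempty finite
    subset N of S, given as a duplicate-free nonempty list.  An N-profile is
    a map S -> E of which only the values on N matter. *)
Definition society d (S : orderType d) (N : seq S) : Prop := N != [::] /\ uniq N.

Definition equiv_profiles d (S : orderType d) (E : Type)
  (N : seq S) (Phi : S -> E) (M : seq S) (Psi : S -> E) : Prop :=
  size N = size M /\ map Phi (sort <=%O N) = map Psi (sort <=%O M).

(** A fusion operator: nabla N Phi E = nabla(Phi, E) for the N-profile Phi. *)
Definition fusion_op d (S : orderType d) (E : Type) := seq S -> (S -> E) -> E -> E.

(** nabla(E_i, E) for the {i}-profile E_i *)
Definition nab1 d (S : orderType d) (E : Type) (nabla : fusion_op S E)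
  (i : S) (Ei : E) (e : E) : E := nabla [:: i] (fun _ => Ei) e.

Section FusionProps.
Variables (P : finType) (E : Type) (B : E -> form P) (d : Order.disp_t)
  (S : orderType d) (nabla : fusion_op S E).

Definition ESF1 : Prop := forall N, society N -> forall (Phi : S -> E) (e : E),
  entails (B (nabla N Phi e)) (B e).

Definition ESF2 : Prop := forall N M, society N -> society M ->
  forall (Phi Psi : S -> E) (e e' : E),
  equiv_profiles N Phi M Psi -> fequiv (B e) (B e') ->
  fequiv (B (nabla N Phi e)) (B (nabla M Psi e')).

Definition ESF3 : Prop := forall N, society N -> forall (Phi : S -> E) (e e' e'' : E),
  fequiv (B e) (FAnd (B e') (B e'')) ->
  entails (FAnd (B (nabla N Phi e')) (B e'')) (B (nabla N Phi e)).

Definition ESF4 : Prop := forall N, society N -> forall (Phi : S -> E) (e e' e'' : E),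
  fequiv (B e) (FAnd (B e') (B e'')) ->
  consistent (FAnd (B (nabla N Phi e')) (B e'')) ->
  entails (B (nabla N Phi e)) (FAnd (B (nabla N Phi e')) (B e'')).

Definition ES_basic_fusion : Prop := [/\ ESF1, ESF2, ESF3 & ESF4].

Definition ESF_SD : Prop :=
  forall (i : S) (w1 w2 w3 : interp P), w1 != w2 -> w2 != w3 -> w1 != w3 ->
  forall e12 e23 : E,
  models (B e12) = [set w1; w2] -> models (B e23) = [set w2; w3] ->
  [/\ (exists Ei, models (B (nab1 nabla i Ei e12)) = [set w1; w2] /\
                  models (B (nab1 nabla i Ei e23)) = [set w2; w3]),
      (exists Ei, models (B (nab1 nabla i Ei e12)) = [set w1; w2] /\
                  models (B (nab1 nabla i Ei e23)) = [set w2]),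
      (exists Ei, models (B (nab1 nabla i Ei e12)) = [set w1] /\
                  models (B (nab1 nabla i Ei e23)) = [set w2; w3]) &
      (exists Ei, models (B (nab1 nabla i Ei e12)) = [set w1] /\
                  models (B (nab1 nabla i Ei e23)) = [set w2])].

Definition ESF_P : Prop :=
  forall N, society N -> forall (Phi : S -> E) (e e' : E),
  consistent (bigAnd [seq B (nab1 nabla i (Phi i) e) | i <- N]) ->
  (forall i, i \in N -> ~ consistent (FAnd (B (nab1 nabla i (Phi i) e)) (B e'))) ->
  ~ consistent (FAnd (B (nabla N Phi e)) (B e')).

Definition ESF_I : Prop :=
  forall N, society N -> forall (Phi Phi' : S -> E) (e : E),
  (forall e' : E, entails (B e') (B e) ->
     forall j, j \in N ->
     fequiv (B (nab1 nabla j (Phi j) e')) (B (nab1 nabla j (Phi' j) e'))) ->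
  fequiv (B (nabla N Phi e)) (B (nabla N Phi' e)).

(** Coalitions D (subsets of N, given as lists) and decisiveness. *)
Definition locally_decisive (N D : seq S) (e e' : E) : Prop :=
  forall Phi : S -> E,
  (forall i, i \in D -> ~ consistent (FAnd (B (nab1 nabla i (Phi i) e)) (B e'))) ->
  (forall j, j \in N -> j \notin D -> fequiv (B (nab1 nabla j (Phi j) e)) (B e')) ->
  consistent (bigAnd [seq B (nab1 nabla i (Phi i) e) | i <- D]) ->
  ~ consistent (FAnd (B (nabla N Phi e)) (B e')).

Definition decisive (N D : seq S) (e e' : E) : Prop :=
  forall Phi : S -> E,
  (forall i, i \in D -> ~ consistent (FAnd (B (nab1 nabla i (Phi i) e)) (B e'))) ->
  consistent (bigAnd [seq B (nab1 nabla i (Phi i) e) | i <- D]) ->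
  ~ consistent (FAnd (B (nabla N Phi e)) (B e')).

End FusionProps.

From mathcomp Require Import all_boot all_order.
From Stdlib Require Import ClassicalEpsilon.
Set Implicit Arguments. Unset Strict Implicit. Unset Printing Implicit Defensive.

(* A fused (or individual) epistemic state, seen as a function of the input
   E, chooses the models of B(nabla(Phi, E)) from the menu [[B(E)]]; (ESF1-4)
   make this an Arrow-rational choice, so strict preferences between
   interpretations compose transitively.  Given Phi, (ESF-SD) rebuilds each
   agent so that the choice from {w, w''} is unchanged, everybody strictly
   prefers w' to w'', the members of D strictly prefer w to w' and all others
   w' to w.  Local decisiveness then gives w over w' for the new profile,
   unanimity (ESF-P) gives w' over w'', hence w over w''; by (ESF-I) the
   original profile fuses {w, w''} in the same way. *)

Lemma models_and (P : finType) (f g : form P) :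
  models (FAnd f g) = models f :&: models g.
Proof. by apply/setP=> x; rewrite !inE. Qed.

Lemma entails_subset (P : finType) (f g : form P) :
  entails f g <-> models f \subset models g.
Proof.
split=> [fg|/subsetP fg x fx]; first by apply/subsetP=> x; rewrite !inE; apply: fg.
by have := fg x; rewrite !inE; apply.
Qed.

Lemma fequiv_models (P : finType) (f g : form P) :
  fequiv f g <-> models f = models g.
Proof.
split=> [[/entails_subset fg /entails_subset gf]|fg].
  by apply/eqP; rewrite eqEsubset fg gf.
by split; apply/entails_subset; rewrite fg.
Qed.

Lemma consistent_models (P : finType) (f : form P) :
  consistent f <-> models f != set0.
Proof.
split=> [fcons|/set0Pn[x]]; last by rewrite inE => fx fbot; have := fbot x fx.
apply/negP=> /eqP no_model; apply: fcons => x fx.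
have : x \in models f by rewrite inE.
by rewrite no_model inE.
Qed.

Lemma consistent_and_set1 (P : finType) (f g : form P) (b : interp P) :
  models g = [set b] -> consistent (FAnd f g) <-> b \in models f.
Proof.
move=> gb; rewrite consistent_models models_and gb; split.
  by case/set0Pn=> x; rewrite !inE => /andP[fx /eqP <-].
by move=> fb; apply/set0Pn; exists b; rewrite in_setI fb set11.
Qed.

Lemma consistent_bigAnd (P : finType) (T : eqType) (F : T -> form P) (s : seq T)
    (x : interp P) :
  (forall i, i \in s -> x \in models (F i)) -> consistent (bigAnd [seq F i | i <- s]).
Proof.
move=> Fx; apply/consistent_models/set0Pn; exists x; rewrite inE.
elim: s Fx => //= i s IHs Fx; have := Fx i (mem_head i s); rewrite inE => -> /=.
by apply: IHs => j js; apply: Fx; rewrite in_cons js orbT.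
Qed.

(* Every set of interpretations is the set of models of a formula: the
   disjunction of the characteristic conjunctions of its elements. *)
Definition literal (P : finType) (u : interp P) (p : P) : form P :=
  if u p then FVar p else FNeg (FVar p).

Definition char_form (P : finType) (u : interp P) : form P :=
  bigAnd [seq literal u p | p <- enum P].

Definition set_form (P : finType) (A : {set interp P}) : form P :=
  foldr (fun u f => FOr (char_form u) f) FBot (enum A).

Lemma eval_char_form (P : finType) (x u : interp P) : eval x (char_form u) = (x == u).
Proof.
have eval_lit p : eval x (literal u p) = (x p == u p).
  by rewrite /literal; case: (u p) => /=; case: (x p).
have -> : eval x (char_form u) = all (fun p => eval x (literal u p)) (enum P).
  by rewrite /char_form; elim: (enum P) => //= p s ->.
apply/allP/eqP=> [xu|xu p _]; last by rewrite eval_lit xu.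
by apply/ffunP=> p; apply/eqP; rewrite -eval_lit; apply: xu; rewrite mem_enum.
Qed.

Lemma models_set_form (P : finType) (A : {set interp P}) : models (set_form A) = A.
Proof.
apply/setP=> x; rewrite inE /set_form -mem_enum.
by elim: (enum A) => //= u s ->; rewrite eval_char_form in_cons.
Qed.

Lemma set2_other (T : finType) (a b x y u : T) :
  x \in [set a; b] -> y \in [set a; b] -> u \in [set a; b] ->
  x != u -> y != u -> x = y.
Proof. by rewrite !inE => /orP[]/eqP-> /orP[]/eqP-> /orP[]/eqP->; rewrite ?eqxx. Qed.

Lemma subset_set2_set1 (T : finType) (X : {set T}) (a b : T) :
  X \subset [set a; b] -> X != set0 -> b \notin X -> X = [set a].
Proof.
move=> /subsetP Xab X0 bX; have : X \subset [set a].
  apply/subsetP=> x Xx; have := Xab x Xx; rewrite !inE => /orP[] // /eqP xb.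
  by rewrite -xb Xx in bX.
by rewrite subset1 (negbTE X0) orbF => /eqP.
Qed.

Section RationalChoice.
Variables (I : finType) (E : Type) (mB : E -> {set I}).

(* [c e] is the part of the finite menu [mB e] that is chosen; the third
   clause is Arrow's axiom: restricting the menu restricts the choice. *)
Definition rational_choice (c : E -> {set I}) : Prop :=
  [/\ forall e, c e \subset mB e, forall e, c e != set0 &
      forall e e', mB e \subset mB e' -> c e' :&: mB e != set0 ->
      c e = c e' :&: mB e].

Hypothesis mB_onto : forall A : {set I}, A != set0 -> exists e, mB e = A.

Variable c : E -> {set I}.
Hypothesis c_rational : rational_choice c.

Lemma choice_restrict (e e' : E) (y : I) :
  mB e \subset mB e' -> y \in c e' -> y \in mB e -> c e = c e' :&: mB e.
Proof.
case: c_rational => _ _ restr ee' ye' ye; apply: restr => //.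
by apply/set0Pn; exists y; rewrite inE ye' ye.
Qed.

Lemma choice_set1 (e : E) (a : I) : mB e = [set a] -> c e = [set a].
Proof.
case: c_rational => sub neq0 _ ea; apply/eqP.
by have := sub e; rewrite ea subset1 (negbTE (neq0 e)) orbF.
Qed.

Lemma choice_pair_set1 (e : E) (a b : I) :
  mB e = [set a; b] -> b \notin c e -> c e = [set a].
Proof. by case: c_rational => sub neq0 _ eab; apply: subset_set2_set1; rewrite -?eab. Qed.

Lemma choice_pair_cases (e : E) (a b : I) : mB e = [set a; b] ->
  [\/ c e = [set a], c e = [set b] | c e = [set a; b]].
Proof.
case: c_rational => sub neq0 _ eab.
have [ae|ae] := boolP (a \in c e); have [be|be] := boolP (b \in c e).
- apply: Or33; apply/eqP; rewrite eqEsubset -{1}eab sub.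
  by apply/subsetP=> x; rewrite !inE => /orP[]/eqP->.
- by apply: Or31; apply: choice_pair_set1 eab be.
- by apply: Or32; apply: (choice_pair_set1 (a := b) _ ae); rewrite eab setUC.
- case/set0Pn: (neq0 e) => y ye; have := subsetP (sub e) y ye.
  by rewrite eab !inE => /orP[]/eqP yab; rewrite -yab ye in ae be.
Qed.

(* Transitivity of strict preference: a over b and b weakly over x give a
   over x, by looking at the choice from the menu {a, b, x}. *)
Lemma choice_trans (a b x : I) (eab ebx eax : E) :
  a != b -> b != x -> a != x ->
  mB eab = [set a; b] -> mB ebx = [set b; x] -> mB eax = [set a; x] ->
  c eab = [set a] -> b \in c ebx -> c eax = [set a].
Proof.
move=> ab bx ax Hab Hbx Hax ca cb.
case: c_rational => sub neq0 _.
have [T HT] : exists T, mB T = [set a; b; x].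
  by apply: mB_onto; apply/set0Pn; exists a; rewrite !inE eqxx.
have abT : mB eab \subset mB T.
  by rewrite Hab HT; apply/subsetP=> y; rewrite !inE => /orP[]->; rewrite ?orbT.
have bxT : mB ebx \subset mB T.
  by rewrite Hbx HT; apply/subsetP=> y; rewrite !inE => /orP[]->; rewrite ?orbT.
have axT : mB eax \subset mB T.
  by rewrite Hax HT; apply/subsetP=> y; rewrite !inE => /orP[]->; rewrite ?orbT.
have bT : b \notin c T.
  apply/negP=> bT; have b_ab : b \in mB eab by rewrite Hab !inE eqxx orbT.
  move: ca; rewrite (choice_restrict abT bT b_ab) => /setP/(_ b).
  by rewrite !inE bT b_ab eq_sym (negbTE ab).
have xT : x \notin c T.
  apply/negP=> xT; have x_bx : x \in mB ebx by rewrite Hbx !inE eqxx orbT.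
  by move: cb; rewrite (choice_restrict bxT xT x_bx) inE (negbTE bT).
have aT : a \in c T.
  case/set0Pn: (neq0 T) => y yT; have := subsetP (sub T) y yT.
  rewrite HT !inE => /orP[/orP[]|]/eqP ey; subst y => //.
    by rewrite yT in bT.
  by rewrite yT in xT.
have a_ax : a \in mB eax by rewrite Hax !inE eqxx.
rewrite (choice_restrict axT aT a_ax) Hax; apply/setP=> y; rewrite !inE.
case: (y =P a) => [->|_]; first by rewrite aT.
by case: (y =P x) => [->|_]; rewrite ?(negbTE xT) ?andbF.
Qed.

End RationalChoice.

Lemma choice_determined (I : finType) (E : Type) (mB c1 c2 : E -> {set I})
    (e0 e : E) (a b : I) :
  rational_choice mB c1 -> rational_choice mB c2 ->
  mB e0 = [set a; b] -> mB e \subset mB e0 -> c1 e0 = c2 e0 -> c1 e = c2 e.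
Proof.
move=> c1_rat c2_rat He0 ee0 c12.
have [/eqP disj|/set0Pn[y]] := boolP (c1 e0 :&: mB e == set0); last first.
  rewrite inE => /andP[y1 ye].
  by rewrite (choice_restrict c1_rat ee0 y1 ye) (choice_restrict c2_rat ee0 _ ye) -c12.
have [sub1 neq1 _] := c1_rat; case/set0Pn: (neq1 e0) => u u1.
have u_ab : u \in [set a; b] by rewrite -He0 (subsetP (sub1 e0)).
have not_u t : t \in mB e -> t != u.
  by move=> te; apply/eqP=> tu; move/setP/(_ t): disj; rewrite !inE te tu u1.
case/set0Pn: (neq1 e) => y /(subsetP (sub1 e)) ye.
have ey : mB e = [set y].
  apply/setP=> z; rewrite inE; apply/idP/eqP=> [ze|-> //].
  by apply: (set2_other _ _ u_ab); rewrite ?not_u // -He0 (subsetP ee0).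
by rewrite (choice_set1 c1_rat ey) (choice_set1 c2_rat ey).
Qed.

Section Fusion.
Variables (P : finType) (E : Type) (B : E -> form P) (d : Order.disp_t)
  (S : orderType d) (nabla : fusion_op S E).
Hypothesis B_space : epistemic_space B.

Lemma models_belief_neq0 (e : E) : models (B e) != set0.
Proof. by case: B_space => _ realize; apply/consistent_models/realize; exists e; split. Qed.

Lemma exists_belief (A : {set interp P}) : A != set0 -> exists e, models (B e) = A.
Proof.
move=> A0; case: B_space => _ realize.
have [e /fequiv_models eA] : exists e, fequiv (B e) (set_form A).
  by apply/realize/consistent_models; rewrite models_set_form.
by exists e; rewrite eA models_set_form.
Qed.

Hypothesis nabla_basic : ES_basic_fusion B nabla.

Local Notation menu := (fun e => models (B e)).
Local Notation ch i Ei e := (models (B (nab1 nabla i Ei e))).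

Lemma fusion_rational (N : seq S) (Phi : S -> E) : society N ->
  rational_choice menu (fun e => models (B (nabla N Phi e))).
Proof.
case: nabla_basic => ESF1 _ ESF3 ESF4 socN; split=> [e|e|e e' ee' meet].
- exact/entails_subset/ESF1.
- exact: models_belief_neq0.
- have e_eq : fequiv (B e) (FAnd (B e') (B e)).
    by apply/fequiv_models; rewrite models_and; apply/esym/setIidPr.
  apply/eqP; rewrite eqEsubset -models_and; apply/andP; split; apply/entails_subset.
    by apply: ESF4 => //; apply/consistent_models; rewrite models_and.
  exact: ESF3.
Qed.

Lemma nab1_rational (i : S) (Ei : E) : rational_choice menu (fun e => ch i Ei e).
Proof. exact: fusion_rational. Qed.

Lemma pareto_pair (N : seq S) (Phi : S -> E) (e : E) (a b : interp P) :
  ESF_P B nabla -> society N -> a != b -> models (B e) = [set a; b] ->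
  (forall i, i \in N -> ch i (Phi i) e = [set a]) ->
  models (B (nabla N Phi e)) = [set a].
Proof.
move=> pareto socN ab eab unanimous.
have [eb ebb] : exists eb, models (B eb) = [set b].
  by apply: exists_belief; apply/set0Pn; exists b; rewrite inE.
apply: (choice_pair_set1 (fusion_rational Phi socN) eab).
apply/negP => /(consistent_and_set1 _ ebb); apply: pareto => //.
  by apply: (consistent_bigAnd (x := a)) => i iN; rewrite unanimous // inE.
by move=> i iN /(consistent_and_set1 _ ebb); rewrite unanimous // inE eq_sym (negbTE ab).
Qed.

Lemma locally_decisive_pair (N D : seq S) (Phi : S -> E) (e e' : E) (a b : interp P) :
  locally_decisive B nabla N D e e' -> society N -> a != b ->
  models (B e) = [set a; b] -> models (B e') = [set b] ->
  (forall i, i \in D -> ch i (Phi i) e = [set a]) ->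
  (forall j, j \in N -> j \notin D -> ch j (Phi j) e = [set b]) ->
  models (B (nabla N Phi e)) = [set a].
Proof.
move=> decD socN ab eab e'b chD chND.
apply: (choice_pair_set1 (fusion_rational Phi socN) eab).
apply/negP => /(consistent_and_set1 _ e'b); apply: decD.
- by move=> i iD /(consistent_and_set1 _ e'b); rewrite chD // inE eq_sym (negbTE ab).
- by move=> j jN jD; apply/fequiv_models; rewrite chND // e'b.
- by apply: (consistent_bigAnd (x := a)) => i iD; rewrite chD // inE.
Qed.

Lemma independent_pair (N : seq S) (Phi Phi' : S -> E) (e : E) (a b : interp P) :
  ESF_I B nabla -> society N -> models (B e) = [set a; b] ->
  (forall j, j \in N -> ch j (Phi j) e = ch j (Phi' j) e) ->
  models (B (nabla N Phi e)) = models (B (nabla N Phi' e)).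
Proof.
move=> indep socN eab agree; apply/fequiv_models.
apply: indep => // e' /entails_subset e'e j jN; apply/fequiv_models.
exact: (choice_determined (nab1_rational _ _) (nab1_rational _ _) eab e'e (agree j jN)).
Qed.

Section Reprofile.
Hypothesis SD : ESF_SD B nabla.
Variables (w w' v : interp P) (Eww' Ew'v Ewv : E).
Hypotheses (ww' : w != w') (w'v : w' != v) (wv : w != v).
Hypotheses (HEww' : models (B Eww') = [set w; w'])
  (HEw'v : models (B Ew'v) = [set w'; v]) (HEwv : models (B Ewv) = [set w; v]).

Local Notation ch_trans i Ei := (choice_trans exists_belief (nab1_rational i Ei)).

(* Keeping the choice from {w, v} and imposing w' over v forces w' over w,
   unless w is strictly preferred to v, where w over w' can be imposed. *)
Lemma sd_decisive_reprofile (i : S) (Ei0 : E) :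
  ch i Ei0 Ewv = [set w] ->
  exists Ei, [/\ ch i Ei Ewv = ch i Ei0 Ewv, ch i Ei Ew'v = [set w'] &
                 ch i Ei Eww' = [set w]].
Proof.
move=> Ei0w; have [_ _ _ [Ei [Eiww' Eiw'v]]] := SD i ww' w'v wv HEww' HEw'v.
exists Ei; split=> //; rewrite Ei0w.
apply: (ch_trans i Ei ww' w'v wv HEww' HEw'v HEwv Eiww').
by rewrite Eiw'v set11.
Qed.

Lemma sd_nondecisive_reprofile (i : S) (Ei0 : E) :
  exists Ei, [/\ ch i Ei Ewv = ch i Ei0 Ewv, ch i Ei Ew'v = [set w'] &
                 ch i Ei Eww' = [set w']].
Proof.
have w'w : w' != w by rewrite eq_sym.
have vw : v != w by rewrite eq_sym.
have HEw'w : models (B Eww') = [set w'; w] by rewrite HEww' setUC.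
have HEvw : models (B Ewv) = [set v; w] by rewrite HEwv setUC.
case: (choice_pair_cases (nab1_rational i Ei0) HEwv) => ->.
- have [_ _ _ [Ei [Eiw'w Eiwv]]] := SD i w'w wv w'v HEw'w HEwv.
  exists Ei; split=> //; apply: (ch_trans i Ei w'w wv w'v HEw'w HEwv HEw'v Eiw'w).
  by rewrite Eiwv set11.
- have [_ _ _ [Ei [Eiw'v Eivw]]] := SD i w'v vw w'w HEw'v HEvw.
  exists Ei; split=> //; apply: (ch_trans i Ei w'v vw w'w HEw'v HEvw HEw'w Eiw'v).
  by rewrite Eivw set11.
- have [_ _ [Ei [Eiw'w Eiwv]] _] := SD i w'w wv w'v HEw'w HEwv.
  exists Ei; split=> //; apply: (ch_trans i Ei w'w wv w'v HEw'w HEwv HEw'v Eiw'w).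
  by rewrite Eiwv !inE eqxx.
Qed.

Lemma sd_reprofile (D : seq S) (Phi : S -> E) :
  (forall i, i \in D -> ch i (Phi i) Ewv = [set w]) ->
  forall i, exists Ei,
    [/\ ch i Ei Ewv = ch i (Phi i) Ewv, ch i Ei Ew'v = [set w'] &
        ch i Ei Eww' = if i \in D then [set w] else [set w']].
Proof.
move=> Dw i; case: ifP => [iD|_]; last exact: sd_nondecisive_reprofile.
exact: sd_decisive_reprofile (Dw i iD).
Qed.

End Reprofile.

End Fusion.

Theorem proposition14
  (P : finType) (E : Type) (B : E -> form P) (d : Order.disp_t) (S : orderType d)
  (HP : 2 <= #|P|) (Hspace : epistemic_space B)
  (Hwo : well_founded (fun x y : S => (x < y)%O))
  (nabla : fusion_op S E)
  (Hbasic : ES_basic_fusion B nabla)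
  (HSD : ESF_SD B nabla) (HPar : ESF_P B nabla) (HI : ESF_I B nabla)
  (N : seq S) (HN : society N) (D : seq S) (HD : {subset D <= N})
  (w w' : interp P) (Hww' : w != w')
  (Eww' Ew' : E)
  (HEww' : models (B Eww') = [set w; w'])
  (HEw' : models (B Ew') = [set w'])
  (Hloc : locally_decisive B nabla N D Eww' Ew') :
  forall w'' : interp P, w'' != w -> w'' != w' ->
  forall Eww'' Ew'' : E,
  models (B Eww'') = [set w; w''] ->
  models (B Ew'') = [set w''] ->
  decisive B nabla N D Eww'' Ew''.
Proof.
move=> v vw vw' Ewv Ev HEwv HEv Phi Dincons Dcons.
have wv : w != v by rewrite eq_sym.
have w'v : w' != v by rewrite eq_sym.
have [Ew'v HEw'v] : exists e, models (B e) = [set w'; v].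
  by apply: (exists_belief Hspace); apply/set0Pn; exists w'; rewrite !inE eqxx.
have Dw i : i \in D -> models (B (nab1 nabla i (Phi i) Ewv)) = [set w].
  move=> iD; apply: (choice_pair_set1 (nab1_rational Hspace Hbasic i (Phi i)) HEwv).
  by apply/negP => /(consistent_and_set1 _ HEv); apply: Dincons.
have /choice[Phi' HPhi'] := sd_reprofile Hspace Hbasic HSD Hww' w'v wv HEww' HEw'v HEwv Dw.
have fused_ww' : models (B (nabla N Phi' Eww')) = [set w].
  apply: (locally_decisive_pair Hspace Hbasic Hloc HN Hww' HEww' HEw').
    by move=> i iD; case: (HPhi' i) => _ _; rewrite iD.
  by move=> j _ jD; case: (HPhi' j) => _ _; rewrite (negbTE jD).
have fused_w'v : models (B (nabla N Phi' Ew'v)) = [set w'].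
  by apply: (pareto_pair Hspace Hbasic HPar HN w'v HEw'v) => i _; case: (HPhi' i).
have fused_wv : models (B (nabla N Phi' Ewv)) = [set w].
  apply: (choice_trans (exists_belief Hspace) (fusion_rational Hspace Hbasic Phi' HN)
            Hww' w'v wv HEww' HEw'v HEwv fused_ww').
  by rewrite fused_w'v set11.
have same : models (B (nabla N Phi Ewv)) = models (B (nabla N Phi' Ewv)).
  by apply: (independent_pair Hspace Hbasic HI HN HEwv) => j _; case: (HPhi' j).
by move=> /(consistent_and_set1 _ HEv); rewrite same fused_wv inE eq_sym (negbTE wv).
Qed.
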